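(* Let $\mathcal{C}$ be a small category and $k$ a field. Then the trivial module $\underline{k}$ is a direct summand of $\mathrm{Res}_\tau(k\mathcal{C})$ as $kF(\mathcal{C})$-modules; i.e. $\mathrm{Res}_\tau(k\mathcal{C})\cong\underline{k}\oplus N_{\mathcal{C}}$ for some $kF(\mathcal{C})$-module $N_{\mathcal{C}}$.
   Context: Modules over a category algebra are identified with covariant functors to $\mathrm{Vect}_k$; $\underline{k}$ is the constant functor with value $k$. $\mathcal{C}^e=\mathcal{C}\times\mathcal{C}^{op}$, and $k\mathcal{C}$ is the functor $\mathcal{C}^e\to\mathrm{Vect}_k$ with $k\mathcal{C}(x,y)=k\mathrm{Hom}_{\mathcal{C}}(y,x)$ (zero if empty), $(u,v^{op})$ acting by $\alpha\mapsto u\alpha v$. The category of factorizations $F(\mathcal{C})$ has objects $[\alpha]$, $\alpha\in\mathrm{Mor}\,\mathcal{C}$; for $\alpha:y\to x$, $\alpha':y'\to x'$ a morphism $[\alpha]\to[\alpha']$ is a pair $(u,v^{op})$ with $u:x\to x'$, $v:y'\to y$ and $\alpha'=u\alpha v$. $\tau:F(\mathcal{C})\to\mathcal{C}^e$ sends $[\alpha]\mapsto(x,y)$ and $(u,v^{op})\mapsto(u,v^{op})$, and $\mathrm{Res}_\tau$ is precomposition with $\tau$. *)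

From HB Require Import structures.
From mathcomp Require Import all_boot all_algebra.
From mathcomp Require Import boolp finmap.
From mathcomp.multinomials Require Import monalg.

Set Implicit Arguments.
Unset Strict Implicit.
Unset Printing Implicit Defensive.

Import GRing.Theory.
Local Open Scope ring_scope.

Record category := Category {
  Ob : Type;
  Hom : Ob -> Ob -> Type;
  idm : forall a, Hom a a;
  comp : forall a b c, Hom b c -> Hom a b -> Hom a c;
  comp1m : forall a b (f : Hom a b), comp (idm b) f = f;
  compm1 : forall a b (f : Hom a b), comp f (idm a) = f;
  compA : forall a b c d (h : Hom c d) (g : Hom b c) (f : Hom a b),
      comp h (comp g f) = comp (comp h g) f
}.
Arguments Hom : clear implicits.
Arguments idm {C} a : rename.
Arguments comp {C a b c} g f : rename.

(* Hom-sets as choiceTypes (classically, every set is one). *)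
Definition hom (C : category) (a b : Ob C) : Type := Hom C a b.
Arguments hom : clear implicits.
HB.instance Definition _ (C : category) a b := gen_eqMixin (hom C a b).
HB.instance Definition _ (C : category) a b := gen_choiceMixin (hom C a b).

Record functor (D E : category) := Functor {
  fob : Ob D -> Ob E;
  fmor : forall a b, Hom D a b -> Hom E (fob a) (fob b);
  fmor_id : forall a, fmor (idm a) = idm (fob a);
  fmor_comp : forall a b c (g : Hom D b c) (f : Hom D a b),
      fmor (comp g f) = comp (fmor g) (fmor f)
}.
Arguments fmor {D E} F {a b} f : rename.

(* Modules over the category algebra kD = covariant functors D -> Vect_k.
   The data of such a functor: *)
Record premodule (k : fieldType) (D : category) := PreModule {
  mob : Ob D -> lmodType k;
  mmor : forall a b, Hom D a b -> mob a -> mob b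
}.
Arguments mmor {k D} M {a b} f x : rename.

Definition is_module (k : fieldType) (D : category) (M : premodule k D) : Prop :=
  [/\ (forall a b (f : Hom D a b), linear (mmor M f)),
      (forall a (x : mob M a), mmor M (idm a) x = x) &
      (forall a b c (g : Hom D b c) (f : Hom D a b) (x : mob M a),
          mmor M (comp g f) x = mmor M g (mmor M f x))].

Definition mod_iso (k : fieldType) (D : category) (M N : premodule k D) : Prop :=
  exists phi : forall a, mob M a -> mob N a,
    [/\ (forall a, linear (phi a)),
        (forall a, bijective (phi a)) &
        (forall a b (f : Hom D a b) (x : mob M a),
            phi b (mmor M f x) = mmor N f (phi a x))].

Definition dsum (k : fieldType) (D : category) (M N : premodule k D) :
    premodule k D :=
  @PreModule k D (fun a => (mob M a * mob N a)%type)
    (fun a b f x => (mmor M f x.1, mmor N f x.2)).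

Definition trivial_mod (k : fieldType) (D : category) : premodule k D :=
  @PreModule k D (fun _ => k^o) (fun _ _ _ x => x).

Definition Res (k : fieldType) (D E : category) (F : functor D E)
    (M : premodule k E) : premodule k D :=
  @PreModule k D (fun a => mob M (fob F a)) (fun a b f x => mmor M (fmor F f) x).

Section Envelope.
Variable C : category.

Definition env_hom (p q : Ob C * Ob C) : Type :=
  (Hom C p.1 q.1 * Hom C q.2 p.2)%type.

Definition env_id (p : Ob C * Ob C) : env_hom p p := (idm p.1, idm p.2).

Definition env_comp (p q r : Ob C * Ob C) (g : env_hom q r) (f : env_hom p q) :
    env_hom p r := (comp g.1 f.1, comp f.2 g.2).

Lemma env_comp1m p q (f : env_hom p q) : env_comp (env_id q) f = f.
Proof. by case: f => u v; rewrite /env_comp /= comp1m compm1. Qed.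

Lemma env_compm1 p q (f : env_hom p q) : env_comp f (env_id p) = f.
Proof. by case: f => u v; rewrite /env_comp /= comp1m compm1. Qed.

Lemma env_compA p q r s (h : env_hom r s) (g : env_hom q r) (f : env_hom p q) :
  env_comp h (env_comp g f) = env_comp (env_comp h g) f.
Proof. by rewrite /env_comp /= !compA. Qed.

Definition envelope : category :=
  @Category (Ob C * Ob C)%type env_hom env_id env_comp
    env_comp1m env_compm1 env_compA.

End Envelope.

(* kC as a kC^e-module: (x, y) |-> k Hom_C(y, x), the free k-vector space
   on Hom_C(y, x) (zero if empty); (u, v^op) acts by alpha |-> u alpha v,
   extended linearly. *)
Definition kC_ob (k : fieldType) (C : category) (p : Ob C * Ob C) : lmodType k :=
  {malg k[hom C p.2 p.1]}.

Definition kC_mor (k : fieldType) (C : category) (p q : Ob C * Ob C)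
    (f : env_hom p q) (g : kC_ob k p) : kC_ob k q :=
  \sum_(a <- (msupp g : seq _)) << g@_a *g (comp f.1 (comp a f.2) : hom C q.2 q.1) >>.

Definition kC (k : fieldType) (C : category) : premodule k (envelope C) :=
  @PreModule k (envelope C) (kC_ob k (C := C)) (@kC_mor k C).

Section Factorizations.
Variable C : category.

Record fobj := FObj { fx : Ob C; fy : Ob C; farr : hom C fy fx }.

Definition fhom (A B : fobj) : Type :=
  {p : (hom C (fx A) (fx B) * hom C (fy B) (fy A))%type |
     farr B == (comp p.1 (comp (farr A) p.2) : hom C _ _)}.

Lemma fid_proof (A : fobj) :
  farr A == (comp (idm (fx A)) (comp (farr A) (idm (fy A))) : hom C _ _).
Proof. by rewrite comp1m compm1. Qed.

Definition fid (A : fobj) : fhom A A :=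
  exist _ (idm (fx A) : hom C _ _, idm (fy A) : hom C _ _) (fid_proof A).

Lemma fcomp_proof (A B E : fobj) (g : fhom B E) (f : fhom A B) :
  farr E == (comp (comp (sval g).1 (sval f).1)
                  (comp (farr A) (comp (sval f).2 (sval g).2)) : hom C _ _).
Proof.
case: g => [[u' v'] /= /eqP ->]; case: f => [[u v] /= /eqP ->].
by rewrite !compA.
Qed.

Definition fcomp (A B E : fobj) (g : fhom B E) (f : fhom A B) : fhom A E :=
  exist _ (comp (sval g).1 (sval f).1 : hom C _ _,
           comp (sval f).2 (sval g).2 : hom C _ _) (fcomp_proof g f).

Lemma fcomp1m A B (f : fhom A B) : fcomp (fid B) f = f.
Proof. by apply: val_inj; case: f => [[u v] ?] /=; rewrite comp1m compm1. Qed.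

Lemma fcompm1 A B (f : fhom A B) : fcomp f (fid A) = f.
Proof. by apply: val_inj; case: f => [[u v] ?] /=; rewrite comp1m compm1. Qed.

Lemma fcompA A B E G (h : fhom E G) (g : fhom B E) (f : fhom A B) :
  fcomp h (fcomp g f) = fcomp (fcomp h g) f.
Proof. by apply: val_inj => /=; rewrite !compA. Qed.

Definition factorizations : category :=
  @Category fobj fhom fid fcomp fcomp1m fcompm1 fcompA.

Definition tau_ob (A : fobj) : Ob (envelope C) := (fx A, fy A).
Definition tau_mor (A B : fobj) (f : fhom A B) :
    Hom (envelope C) (tau_ob A) (tau_ob B) := sval f.

Lemma tau_id A : tau_mor (fid A) = idm (tau_ob A).
Proof. by []. Qed.

Lemma tau_comp A B E (g : fhom B E) (f : fhom A B) :
  tau_mor (fcomp g f) = comp (tau_mor g) (tau_mor f).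
Proof. by []. Qed.

Definition tau : functor factorizations (envelope C) :=
  @Functor factorizations (envelope C) tau_ob tau_mor tau_id tau_comp.

End Factorizations.

(* The basis of [Res_tau(kC)] at [[alpha] : y -> x] is [Hom_C(y, x)], and each
   morphism [(u, v^op)] of [F(C)] acts on it by the map of sets
   [beta |-> u beta v].  Hence the augmentation (sum of coefficients) is a
   natural transformation onto the trivial module, and the basis vector [alpha]
   itself is a natural splitting of it, because [(u, v^op)] sends [alpha] to
   [u alpha v = alpha'].  So [Res_tau(kC)] is [k] plus the kernel of the
   augmentation. *)
From HB Require Import structures.
From mathcomp Require Import all_boot all_algebra.
From mathcomp Require Import finmap.
From mathcomp.multinomials Require Import monalg.
(* Imported last so that [hom] is the hom-set of [Defs], not [vector.hom]. *)
From Pilot Require Import Defs.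

Set Implicit Arguments.
Unset Strict Implicit.
Unset Printing Implicit Defensive.

Import GRing.Theory.
Local Open Scope ring_scope.

Section LinearExtension.
Variable R : ringType.

Definition malg_map (K1 K2 : choiceType) (phi : K1 -> K2) (g : {malg R[K1]}) :
    {malg R[K2]} :=
  \sum_(a <- msupp g) << g@_a *g phi a >>.

Lemma monalgUZ (K : choiceType) (c x : R) (a : K) :
  << c * x *g a >> = c *: << x *g a >>.
Proof. by apply/malgP => b; rewrite mcoeffZ !mcoeffU mulrnAr. Qed.

Section Map.
Variables (K1 K2 : choiceType) (phi : K1 -> K2).

Lemma malg_mapEw (d : {fset K1}) (g : {malg R[K1]}) : (msupp g `<=` d)%fset ->
  malg_map phi g = \sum_(a <- d) << g@_a *g phi a >>.
Proof.
move=> le_gd; apply: big_fset_incl => // a _ /mcoeff_outdom ->.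
exact: monalgU0.
Qed.

Lemma malg_map_is_linear : linear (malg_map phi).
Proof.
move=> c g1 g2.
have le_scale : (msupp (c *: g1 + g2) `<=` msupp g1 `|` msupp g2)%fset.
  by apply: fsubset_trans (msuppD_le _ _) _; apply: fsetSU; apply: msuppZ_le.
rewrite (malg_mapEw le_scale) (malg_mapEw (fsubsetUl _ (msupp g2))).
rewrite (malg_mapEw (fsubsetUr (msupp g1) _)) scaler_sumr -big_split.
by apply: eq_bigr => a _; rewrite mcoeffD mcoeffZ monalgUD monalgUZ.
Qed.

HB.instance Definition _ :=
  GRing.isLinear.Build R {malg R[K1]} {malg R[K2]} _ (malg_map phi)
    malg_map_is_linear.

Lemma malg_mapU (c : R) (a : K1) : malg_map phi << c *g a >> = << c *g phi a >>.
Proof. by rewrite (malg_mapEw msuppU_le) big_seq_fset1 mcoeffUU. Qed.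

End Map.

Lemma malg_map_comp (K1 K2 K3 : choiceType) (phi : K1 -> K2) (psi : K2 -> K3) g :
  malg_map psi (malg_map phi g) = malg_map (psi \o phi) g.
Proof.
rewrite [malg_map phi g]/malg_map linear_sum.
by apply: eq_bigr => a _; exact: malg_mapU.
Qed.

Lemma eq_malg_map (K1 K2 : choiceType) (phi psi : K1 -> K2) :
  phi =1 psi -> malg_map phi =1 malg_map psi.
Proof. by move=> e g; apply: eq_bigr => a _; rewrite e. Qed.

Lemma malg_map_id (K : choiceType) : malg_map (@id K) =1 id.
Proof. by move=> g; rewrite /malg_map -monalgE. Qed.

End LinearExtension.

Section Augmentation.
Variables (R : ringType) (K : choiceType).

(* Collapsing the basis to a point sums the coefficients. *)
Definition augment (g : {malg R[K]}) : R := (malg_map (fun=> tt) g)@_tt.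

Lemma augmentD : {morph augment : g1 g2 / g1 + g2}.
Proof. by move=> g1 g2; rewrite /augment linearD mcoeffD. Qed.

Lemma augmentZ (c : R) (g : {malg R[K]}) : augment (c *: g) = c * augment g.
Proof. by rewrite /augment linearZ mcoeffZ. Qed.

Lemma augmentU (c : R) (a : K) : augment << c *g a >> = c.
Proof. by rewrite /augment malg_mapU mcoeffUU. Qed.

End Augmentation.

Lemma augment_map (R : ringType) (K1 K2 : choiceType) (phi : K1 -> K2)
    (g : {malg R[K1]}) :
  augment (malg_map phi g) = augment g.
Proof. by rewrite /augment malg_map_comp. Qed.

Section AugmentationKernel.
Variables (R : ringType) (K : choiceType).

Definition augment_kernel : {pred {malg R[K]}} := [pred g | augment g == 0].

Lemma augment_kernel_submod_closed : subsemimod_closed augment_kernel.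
Proof.
split; first split.
- by rewrite inE /augment linear0 mcoeff0.
- by move=> g1 g2; rewrite !inE augmentD => /eqP-> /eqP->; rewrite addr0.
- by move=> c g; rewrite !inE augmentZ => /eqP->; rewrite mulr0.
Qed.

HB.instance Definition _ :=
  GRing.isSubmodClosed.Build R {malg R[K]} augment_kernel
    augment_kernel_submod_closed.

Definition augker := {g : {malg R[K]} | g \in augment_kernel}.
HB.instance Definition _ := [isSub of augker for sval].
HB.instance Definition _ := [Choice of augker by <:].
HB.instance Definition _ := [SubChoice_isSubLmodule of augker by <:].

Lemma augment_augker (x : augker) : augment (val x) = 0.
Proof. exact/eqP/(valP x). Qed.

End AugmentationKernel.

Arguments augment_kernel {R K}.

Section FactorizationModule.
Variables (C : category) (k : fieldType).

Local Notation basis A := (hom C (fy A) (fx A)).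

Lemma kC_morE (p q : Ob C * Ob C) (f : env_hom p q) (g : kC_ob k p) :
  kC_mor f g =
  malg_map (fun a : hom C p.2 p.1 => comp f.1 (comp a f.2) : hom C q.2 q.1) g.
Proof. by []. Qed.

Lemma augment_kC_mor (A B : fobj C) (f : fhom A B) (g : {malg k[basis A]}) :
  augment (kC_mor (tau_mor f) g) = augment g.
Proof. exact: augment_map. Qed.

Lemma fhom_farr (A B : fobj C) (f : fhom A B) :
  comp (sval f).1 (comp (farr A) (sval f).2) = farr B.
Proof. by case: f => [[u v] /= /eqP ->]. Qed.

Lemma kC_mor_augker (A B : fobj C) (f : fhom A B) (x : augker k (basis A)) :
  kC_mor (tau_mor f) (val x) \in augment_kernel.
Proof. by rewrite inE augment_kC_mor; exact: valP x. Qed.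

Definition augker_mod : premodule k (factorizations C) :=
  @PreModule k (factorizations C) (fun A => augker k (basis A))
    (fun A B f x => Sub (kC_mor (tau_mor f) (val x)) (kC_mor_augker f x)).

Lemma augker_mod_is_module : is_module augker_mod.
Proof.
split.
- by move=> A B f c x y; apply: val_inj; rewrite /= !kC_morE linearP.
- move=> A x; apply: val_inj; rewrite /= kC_morE -[RHS]malg_map_id.
  by apply: eq_malg_map => a; rewrite /= comp1m compm1.
- move=> A B E g f x; apply: val_inj; rewrite /= !kC_morE malg_map_comp.
  by apply: eq_malg_map => a; rewrite /= !compA.
Qed.

Lemma sub_augment_farr_in_kernel (A : fobj C) (g : {malg k[basis A]}) :
  g - augment g *: << farr A >> \in augment_kernel.
Proof. by rewrite inE augmentD -scaleNr augmentZ augmentU mulr1 subrr. Qed.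

Definition split_augment (A : fobj C) (g : {malg k[basis A]}) : k^o * augker k (basis A) :=
  (augment g, Sub (g - augment g *: << farr A >>) (sub_augment_farr_in_kernel g)).

Definition join_augment (A : fobj C) (x : k^o * augker k (basis A)) : {malg k[basis A]} :=
  val x.2 + x.1 *: << farr A >>.

Lemma split_augmentK A : cancel (@split_augment A) (@join_augment A).
Proof. by move=> g; rewrite /join_augment /= subrK. Qed.

Lemma augment_join_augment A (x : k^o * augker k (basis A)) :
  augment (join_augment x) = x.1.
Proof. by rewrite augmentD augmentZ augmentU augment_augker mulr1; apply: add0r. Qed.

Lemma join_augmentK A : cancel (@join_augment A) (@split_augment A).
Proof.
move=> [c n]; rewrite /split_augment; congr pair; first exact: augment_join_augment.
by apply: val_inj; rewrite /= (augment_join_augment (c, n)) /join_augment /= addrK.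
Qed.

Lemma split_augment_is_linear A : linear (@split_augment A).
Proof.
move=> c g h; rewrite /split_augment; congr pair.
  by rewrite augmentD (augmentZ c g).
apply: val_inj; rewrite /= (augmentD (c *: g) h) (augmentZ c g).
by rewrite scalerDl scalerBr scalerA opprD addrACA.
Qed.

Lemma split_augment_natural (A B : fobj C) (f : fhom A B) (g : {malg k[basis A]}) :
  split_augment (kC_mor (tau_mor f) g) =
  mmor (dsum (trivial_mod k (factorizations C)) augker_mod) f (split_augment g).
Proof.
rewrite /split_augment /=; congr pair; first exact: augment_kC_mor.
apply: val_inj; rewrite /= augment_kC_mor !kC_morE [in RHS]linearB [in RHS]linearZ /=.
by rewrite malg_mapU fhom_farr.
Qed.

End FactorizationModule.

Theorem lemma2p3p3 (C : category) (k : fieldType) :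
  exists N : premodule k (factorizations C),
    is_module N /\
    mod_iso (Res (tau C) (kC k C)) (dsum (trivial_mod k (factorizations C)) N).
Proof.
exists (augker_mod C k); split; first exact: augker_mod_is_module.
exists (@split_augment C k); split.
- exact: split_augment_is_linear.
- by move=> A; exists (@join_augment C k A); [exact: split_augmentK | exact: join_augmentK].
- exact: split_augment_natural.
Qed.
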